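(* Let $f=\frac1n\sum_{i=1}^nf_i$ with each $f_i$ differentiable, $\|\nabla f_i(x)\|\le G_i$ for all $x$, and $\nabla f_i$ $L_i$-Lipschitz. Let two proper samplings be given: an outer one with marginals $p'_i$, pair matrix $\mathbf P'$ and a vector $v'$ with $\mathbf P'-p'p'^\top\preceq\mathrm{Diag}(p'_1v'_1,\dots,p'_nv'_n)$, and an inner one with marginals $p_i$, pair matrix $\mathbf P$ and a vector $v$ with $\mathbf P-pp^\top\preceq\mathrm{Diag}(p_1v_1,\dots,p_nv_n)$. Let $Q=\sum_{i=1}^n\frac{v_iL_i^2}{p_in^2}$ and $Q'=\sum_{i=1}^n\frac{v'_iG_i^2}{p'_in^2}$. For the iterates of ProxSPIDER-AS (any stepsize $\eta>0$, any inner length $m$), for every $j\ge1$ and $1\le t\le m$, $$E\big[\|\mathcal V_t^{(j)}-\nabla f(x_t^{(j)})\|^2\big]\le Q\sum_{k=1}^tE\big[\|x_k^{(j)}-x_{k-1}^{(j)}\|^2\big]+Q'.$$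
   Context: A sampling is a random subset $S\subseteq[n]$ with marginals $\mathrm{Prob}(i\in S)>0$ and pair matrix with entries $\mathrm{Prob}(\{i,j\}\subseteq S)$; $\preceq$ is the positive semidefinite order. $r:\mathbb{R}^d\to\mathbb{R}$ has proximal mapping $\mathrm{prox}_{\eta r}(y)=\arg\min_x\{\frac1{2\eta}\|x-y\|^2+r(x)\}$ (nonempty). ProxSPIDER-AS: for $j=1,2,\dots$: $x_0^{(j)}=\tilde x^{(j)}$; draw $S^{(j)}$ from the outer sampling and set $\mathcal V_0^{(j)}=\sum_{i\in S^{(j)}}\frac1{np'_i}\nabla f_i(x_0^{(j)})$; $x_1^{(j)}=x_0^{(j)}$; for $t=1,\dots,m$: draw $S_t^{(j)}$ from the inner sampling, $\mathcal V_t^{(j)}=\sum_{i\in S_t^{(j)}}\frac1{np_i}(\nabla f_i(x_t^{(j)})-\nabla f_i(x_{t-1}^{(j)}))+\mathcal V_{t-1}^{(j)}$, $x_{t+1}^{(j)}\in\mathrm{prox}_{\eta r}(x_t^{(j)}-\eta\mathcal V_t^{(j)})$; then $\tilde x^{(j+1)}=x_{m+1}^{(j)}$. All sampled sets are drawn independently of all past randomness. *)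

From HB Require Import structures.
From mathcomp Require Import all_boot all_order all_algebra.
From mathcomp Require Import all_classical all_reals all_analysis.
Set Implicit Arguments. Unset Strict Implicit. Unset Printing Implicit Defensive.
Import Order.TTheory GRing.Theory Num.Theory.
Local Open Scope ring_scope.

Section Defs.
Context {R : realType}.

Definition dotv {d} (x y : 'rV[R]_d) : R := \sum_k x 0 k * y 0 k.
Definition sqnorm {d} (x : 'rV[R]_d) : R := \sum_k x 0 k ^+ 2.
Definition enorm {d} (x : 'rV[R]_d) : R := Num.sqrt (sqnorm x).

(* A sampling = probability mass function of a random subset S of [n]. *)
Definition is_pmf {n} (pS : {set 'I_n} -> R) :=
  (forall S, 0 <= pS S) /\ \sum_(S : {set 'I_n}) pS S = 1.
Definition marg {n} (pS : {set 'I_n} -> R) (i : 'I_n) : R :=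
  \sum_(S : {set 'I_n} | i \in S) pS S.
Definition pairmx {n} (pS : {set 'I_n} -> R) : 'M[R]_n :=
  \matrix_(i, j) \sum_(S : {set 'I_n} | (i \in S) && (j \in S)) pS S.
Definition proper_sampling {n} (pS : {set 'I_n} -> R) :=
  is_pmf pS /\ forall i, 0 < marg pS i.
Definition psd_le {n} (A B : 'M[R]_n) :=
  forall z : 'rV[R]_n, (z *m A *m z^T) 0 0 <= (z *m B *m z^T) 0 0.
Definition ESO {n} (pS : {set 'I_n} -> R) (v : 'I_n -> R) :=
  let p := \row_i marg pS i in
  psd_le (pairmx pS - p^T *m p) (diag_mx (\row_i (marg pS i * v i))).

Definition is_prox_selection {d} (eta : R) (r : 'rV[R]_d -> R)
  (pr : 'rV[R]_d -> 'rV[R]_d) :=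
  forall y x, (2 * eta)^-1 * sqnorm (pr y - y) + r (pr y)
              <= (2 * eta)^-1 * sqnorm (x - y) + r x.

Definition gradf {n d} (gf : 'I_n -> 'rV[R]_d -> 'rV[R]_d) (x : 'rV[R]_d) :=
  (n%:R)^-1 *: \sum_i gf i x.

Definition est {n d} (pS : {set 'I_n} -> R) (S : {set 'I_n})
  (g : 'I_n -> 'rV[R]_d) : 'rV[R]_d :=
  \sum_(i in S) (n%:R * marg pS i)^-1 *: g i.

(* one outer epoch: state t = (x_t, x_{t+1}, V_t) *)
Fixpoint epoch_state {n d} (gf : 'I_n -> 'rV[R]_d -> 'rV[R]_d)
  (po pin : {set 'I_n} -> R) (eta : R) (pr : 'rV[R]_d -> 'rV[R]_d)
  (x0 : 'rV[R]_d) (S0 : {set 'I_n}) (St : nat -> {set 'I_n}) (t : nat)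
  : 'rV[R]_d * 'rV[R]_d * 'rV[R]_d :=
  match t with
  | 0 => (x0, x0, est po S0 (fun i => gf i x0))
  | t'.+1 =>
    let: (xprev, xcur, Vprev) := epoch_state gf po pin eta pr x0 S0 St t' in
    let V := est pin (St t) (fun i => gf i xcur - gf i xprev) + Vprev in
    (xcur, pr (xcur - eta *: V), V)
  end.

(* randomness of one epoch: outer set S^(j) and inner sets S_1^(j)..S_m^(j)
   (S_t stored at index t-1) *)
Definition Edraw (n m : nat) := ({set 'I_n} * {ffun 'I_m -> {set 'I_n}})%type.
Definition e0 {n m} : Edraw n m := (finset.set0, [ffun => finset.set0]).

Definition inner_draw {n m} (e : Edraw n m) (t : nat) : {set 'I_n} :=
  if (insub t.-1 : option 'I_m) is Some o then e.2 o else finset.set0.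

Definition eprob {n m} (po pin : {set 'I_n} -> R) (e : Edraw n m) : R :=
  po e.1 * \prod_(o : 'I_m) pin (e.2 o).

Definition epoch_run {n d m} gf (po pin : {set 'I_n} -> R) eta pr
  (x0 : 'rV[R]_d) (e : Edraw n m) (t : nat) :=
  epoch_state gf po pin eta pr x0 e.1 (inner_draw e) t.

(* xtilde^(j+1) = x_{m+1}^(j) *)
Definition next_xtilde {n d m} gf (po pin : {set 'I_n} -> R) eta pr
  (x0 : 'rV[R]_d) (e : Edraw n m) : 'rV[R]_d :=
  (epoch_run gf po pin eta pr x0 e m).1.2.

Definition xtilde_from {n d m} gf (po pin : {set 'I_n} -> R) eta pr
  (x1 : 'rV[R]_d) (hs : seq (Edraw n m)) : 'rV[R]_d :=
  foldl (next_xtilde gf po pin eta pr) x1 hs.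

(* x_t^(j) and V_t^(j) as functions of the past epochs hs and the current e *)
Definition xiter {n d m} gf (po pin : {set 'I_n} -> R) eta pr (x1 : 'rV[R]_d)
  (hs : seq (Edraw n m)) (e : Edraw n m) (t : nat) : 'rV[R]_d :=
  (epoch_run gf po pin eta pr (xtilde_from gf po pin eta pr x1 hs) e t).1.1.
Definition Viter {n d m} gf (po pin : {set 'I_n} -> R) eta pr (x1 : 'rV[R]_d)
  (hs : seq (Edraw n m)) (e : Edraw n m) (t : nat) : 'rV[R]_d :=
  (epoch_run gf po pin eta pr (xtilde_from gf po pin eta pr x1 hs) e t).2.

(* expectation over the (product) law of all draws of epochs 1..j of a
   quantity depending on epochs 1..j-1 (hs) and epoch j (e) *)
Definition Eexp {n m} (po pin : {set 'I_n} -> R) (j : nat)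
  (F : seq (Edraw n m) -> Edraw n m -> R) : R :=
  \sum_(h : j.-tuple (Edraw n m))
     (\prod_(e <- h) eprob po pin e) * F (take j.-1 h) (nth e0 h j.-1).

End Defs.

From HB Require Import structures.
From mathcomp Require Import all_boot all_order all_algebra.
From mathcomp Require Import all_classical all_reals all_analysis.
From mathcomp Require Import ring lra zify.
Import Order.TTheory GRing.Theory Num.Theory.
Set Implicit Arguments. Unset Strict Implicit. Unset Printing Implicit Defensive.
Local Open Scope ring_scope.

(* Write x_t, V_t for the iterates of one epoch and D_i = grad f_i(x_t) -
   grad f_i(x_{t-1}).  Conditionally on everything before the draw of S_t,
   V_t - grad f(x_t) = (V_{t-1} - grad f(x_{t-1})) + (est_{S_t} D - mean D),
   and the ESO inequality bounds the second moment of the zero-mean sampling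
   error est_{S_t} D - mean D by sum_i v_i |D_i|^2 / (p_i n^2), hence by
   Q |x_t - x_{t-1}|^2 through the Lipschitz constants.  Averaging over S_t
   and inducting on t from E|V_0 - grad f(x_0)|^2 <= Q' (the same ESO bound
   with the gradient bounds G_i) gives the estimate for one epoch started
   from any point; averaging over the earlier epochs gives the theorem. *)

Section FiniteAveraging.
Variables (R : comRingType) (T : finType).

Lemma sum_tuple_rcons k (F : k.+1.-tuple T -> R) :
  \sum_(h : k.+1.-tuple T) F h = \sum_(t : k.-tuple T) \sum_(x : T) F [tuple of rcons t x].
Proof.
rewrite pair_bigA /=.
have rcons_tuple_inj : injective (fun p : k.-tuple T * T => [tuple of rcons p.1 p.2]).
  by move=> [a x] [b y] /(congr1 val) /= /rcons_inj [/val_inj -> ->].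
rewrite (reindex _ (onW_bij _ (inj_card_bij rcons_tuple_inj _))) //.
by rewrite card_prod !card_tuple expnS mulnC.
Qed.

Lemma sum_tuple_prod1 (w : T -> R) k :
  \sum_x w x = 1 -> \sum_(t : k.-tuple T) \prod_(x <- t) w x = 1.
Proof.
move=> w1; elim: k => [|k IHk].
  rewrite (eq_bigr (fun=> 1)) => [|t _]; last by rewrite tuple0 big_nil.
  by rewrite sumr_const card_tuple expn0.
rewrite sum_tuple_rcons -[RHS]IHk; apply: eq_bigr => t _.
transitivity (\sum_x (\prod_(y <- t) w y) * w x); last by rewrite -mulr_sumr w1 mulr1.
by apply: eq_bigr => x _ /=; rewrite big_rcons.
Qed.

(* Resampling one coordinate of a product law: if the weight of e factors as
   c e * q (proj e), where [upd e u] replaces the coordinate [proj e] by u,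
   then redrawing that coordinate from q does not change any average. *)
Lemma sum_resample (U : finType) (w c : T -> R) (q : U -> R)
    (proj : T -> U) (upd : T -> U -> T) (h : T -> R) :
  \sum_u q u = 1 ->
  (forall e, w e = c e * q (proj e)) ->
  (forall e u, c (upd e u) = c e) ->
  (forall e u, proj (upd e u) = u) ->
  (forall e u, upd (upd e u) (proj e) = e) ->
  \sum_e w e * h e = \sum_e w e * \sum_u q u * h (upd e u).
Proof.
move=> q1 wE c_upd proj_upd updK.
transitivity (\sum_e \sum_u c e * q (proj e) * q u * h (upd e u)); last first.
  apply: eq_bigr => e _; rewrite mulr_sumr wE.
  by apply: eq_bigr => u _; rewrite mulrA.
rewrite pair_bigA /=.
pose swap (p : T * U) := (upd p.1 p.2, proj p.1).
have swap_inj : injective swap.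
  by apply: (can_inj (g := swap)) => -[e u]; rewrite /swap /= proj_upd updK.
rewrite (reindex_inj swap_inj) /swap /=.
under [RHS]eq_bigr => p _ do rewrite c_upd proj_upd updK.
rewrite -(pair_bigA _ (fun e u => c e * q u * q (proj e) * h e)) /=.
apply: eq_bigr => e _; rewrite wE.
transitivity (\sum_u q u * (c e * q (proj e) * h e)); first by rewrite -mulr_suml q1 mul1r.
by apply: eq_bigr => u _; ring.
Qed.

End FiniteAveraging.

Section Sampling.
Variables (R : realType) (n : nat) (pS : {set 'I_n} -> R).

Lemma mulmx_quadE (A : 'M[R]_n) (z : 'rV[R]_n) :
  (z *m A *m z^T) 0 0 = \sum_i \sum_j z 0 i * A i j * z 0 j.
Proof.
rewrite mxE; under eq_bigr do rewrite !mxE mulr_suml.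
by rewrite exchange_big.
Qed.

Lemma sampling_mean (z : 'I_n -> R) :
  \sum_S pS S * \sum_(i in S) z i = \sum_i marg pS i * z i.
Proof.
under eq_bigr do rewrite mulr_sumr big_mkcond /=.
rewrite exchange_big; apply: eq_bigr => i _.
rewrite /marg mulr_suml [RHS]big_mkcond /=; apply: eq_bigr => S _.
by case: (i \in S); rewrite ?mul0r.
Qed.

Lemma sampling_second_moment (z : 'I_n -> R) :
  \sum_S pS S * (\sum_(i in S) z i) ^+ 2 = \sum_i \sum_j z i * pairmx pS i j * z j.
Proof.
have expand S : pS S * (\sum_(i in S) z i) ^+ 2 =
    \sum_i \sum_j (if (i \in S) && (j \in S) then pS S * (z i * z j) else 0).
  rewrite expr2 big_distrlr /= mulr_sumr big_mkcond /=.
  apply: eq_bigr => i _; rewrite big_mkcond mulr_sumr /=.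
  case: (i \in S) => /=; last by rewrite big1.
  by apply: eq_bigr => j _; case: (j \in S); rewrite ?mulr0.
under eq_bigr do rewrite expand.
rewrite exchange_big; apply: eq_bigr => i _.
rewrite exchange_big; apply: eq_bigr => j _.
rewrite /pairmx mxE [RHS]mulrAC [RHS]mulrC mulr_suml [RHS]big_mkcond /=.
by apply: eq_bigr => S _; case: ifP; rewrite ?mul0r.
Qed.

Variable v : 'I_n -> R.
Hypothesis pS_pmf : is_pmf pS.
Hypothesis pS_ESO : ESO pS v.

Lemma ESO_quad (z : 'I_n -> R) :
  \sum_i \sum_j z i * pairmx pS i j * z j - (\sum_i marg pS i * z i) ^+ 2
  <= \sum_i marg pS i * v i * z i ^+ 2.
Proof.
have := pS_ESO (\row_i z i); rewrite !mulmx_quadE.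
congr (_ <= _).
  rewrite expr2 mulr_suml -sumrB; apply: eq_bigr => i _.
  rewrite mulr_sumr -sumrB; apply: eq_bigr => j _.
  by rewrite !mxE big_ord1 !mxE; ring.
apply: eq_bigr => i _; rewrite (bigD1 i) //= big1 ?addr0.
  by rewrite !mxE eqxx mulr1n; ring.
by move=> j ji; rewrite !mxE eq_sym (negbTE ji) mulr0n mulr0 mul0r.
Qed.

(* The sampling error sum_(i in S) z_i - sum_i p_i z_i has mean zero, so it
   adds its variance, bounded by ESO_quad, to the square of any shift D. *)
Lemma ESO_variance (D : R) (z : 'I_n -> R) :
  \sum_S pS S * (D + \sum_(i in S) z i - \sum_i marg pS i * z i) ^+ 2
    <= D ^+ 2 + \sum_i marg pS i * v i * z i ^+ 2.
Proof.
have [_ pS1] := pS_pmf.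
set c := \sum_i marg pS i * z i.
have expand S : pS S * (D + \sum_(i in S) z i - c) ^+ 2 =
    (D - c) ^+ 2 * pS S + 2 * (D - c) * (pS S * \sum_(i in S) z i)
    + pS S * (\sum_(i in S) z i) ^+ 2 by ring.
under eq_bigr do rewrite expand.
rewrite !big_split /= -!mulr_sumr pS1 sampling_mean sampling_second_moment.
have := ESO_quad z; rewrite -/c; lra.
Qed.

Lemma ESO_ge0 i : 0 < marg pS i -> 0 <= v i.
Proof.
move=> p_gt0; have := ESO_variance 0 (fun k => (k == i)%:R).
rewrite [X in _ <= _ + X](bigD1 i) //= [X in _ <= _ + (_ + X)]big1 ?addr0; last first.
  by move=> k /negbTE->; rewrite expr0n mulr0.
rewrite eqxx expr0n add0r expr1n mulr1 => bound.
rewrite -(pmulr_rge0 _ p_gt0); apply: le_trans bound.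
apply: sumr_ge0 => S _; apply: mulr_ge0 (sqr_ge0 _).
by case: pS_pmf.
Qed.

Hypothesis n_gt0 : (0 < n)%N.
Hypothesis marg_gt0 : forall i, 0 < marg pS i.

Lemma ESO_variance_rV d (D : 'rV[R]_d) (Dl : 'I_n -> 'rV[R]_d) :
  \sum_S pS S * sqnorm (D + est pS S Dl - (n%:R)^-1 *: \sum_i Dl i)
   <= sqnorm D + \sum_i v i * sqnorm (Dl i) / (marg pS i * n%:R ^+ 2).
Proof.
have n_neq0 : (n%:R : R) != 0 by rewrite pnatr_eq0 -lt0n.
have marg_neq0 i : marg pS i != 0 by rewrite gt_eqF.
pose z i k := (n%:R * marg pS i)^-1 * Dl i 0 k.
have coordE S k : (D + est pS S Dl - (n%:R)^-1 *: \sum_i Dl i) 0 k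
    = D 0 k + \sum_(i in S) z i k - \sum_i marg pS i * z i k.
  rewrite !mxE /est !summxE mulr_sumr.
  congr (_ + _ - _); first by apply: eq_bigr => i _; rewrite mxE.
  by apply: eq_bigr => i _; rewrite /z invfM -!mulrA mulrCA mulVKf.
have -> : sqnorm D + \sum_i v i * sqnorm (Dl i) / (marg pS i * n%:R ^+ 2)
    = \sum_k (D 0 k ^+ 2 + \sum_i marg pS i * v i * z i k ^+ 2).
  rewrite big_split /= exchange_big /=; congr (_ + _).
  apply: eq_bigr => i _; rewrite /sqnorm mulr_sumr mulr_suml.
  by apply: eq_bigr => k _; rewrite /z; field; rewrite n_neq0 marg_neq0.
under eq_bigr do rewrite /sqnorm mulr_sumr.
rewrite exchange_big /=; apply: ler_sum => k _.
under eq_bigr do rewrite coordE.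
exact: ESO_variance.
Qed.

Lemma ESO_weighted_sum_le d (a : 'I_n -> 'rV[R]_d) (c : 'I_n -> R) (s : R) :
  (forall i, sqnorm (a i) <= c i * s) ->
  \sum_i v i * sqnorm (a i) / (marg pS i * n%:R ^+ 2)
  <= (\sum_i v i * c i / (marg pS i * n%:R ^+ 2)) * s.
Proof.
move=> a_le; rewrite mulr_suml; apply: ler_sum => i _.
set w := marg pS i * n%:R ^+ 2.
have w_ge0 : 0 <= v i / w by rewrite divr_ge0 ?ESO_ge0 // mulr_ge0 ?exprn_ge0 // ltW.
rewrite mulrAC (_ : _ * s = v i / w * (c i * s)); last by ring.
exact: ler_wpM2l.
Qed.

End Sampling.

Section Norms.
Variables (R : realType) (d : nat).

Lemma sqnorm_ge0 (a : 'rV[R]_d) : 0 <= sqnorm a.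
Proof. by apply: sumr_ge0 => k _; exact: sqr_ge0. Qed.

Lemma sqnorm0 : sqnorm (0 : 'rV[R]_d) = 0.
Proof. by rewrite /sqnorm big1 // => k _; rewrite mxE expr0n. Qed.

Lemma sqnormE (a : 'rV[R]_d) : sqnorm a = enorm a ^+ 2.
Proof. by rewrite /enorm sqr_sqrtr // sqnorm_ge0. Qed.

Lemma sqnorm_le_sqr (a : 'rV[R]_d) (c : R) : enorm a <= c -> sqnorm a <= c ^+ 2.
Proof.
by move=> a_le; rewrite sqnormE ler_sqr ?nnegrE ?sqrtr_ge0 ?(le_trans _ a_le) ?sqrtr_ge0.
Qed.

Lemma sqnorm_le_lipschitz (a b : 'rV[R]_d) (L : R) :
  enorm a <= L * enorm b -> sqnorm a <= L ^+ 2 * sqnorm b.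
Proof. by move=> /sqnorm_le_sqr; rewrite [sqnorm b]sqnormE exprMn. Qed.

End Norms.

Section EpochLaw.
Variables (R : realType) (n m : nat) (po pin : {set 'I_n} -> R).
Hypotheses (po_pmf : is_pmf po) (pin_pmf : is_pmf pin).

Definition Eepoch (F : Edraw n m -> R) : R := \sum_e eprob po pin e * F e.

Lemma eprob_ge0 (e : Edraw n m) : 0 <= eprob po pin e.
Proof.
case: po_pmf pin_pmf => [po_ge0 _] [pin_ge0 _].
by apply: mulr_ge0 => //; exact: prodr_ge0.
Qed.

Lemma eprob_sum1 : \sum_e eprob (m := m) po pin e = 1.
Proof.
case: po_pmf pin_pmf => [_ po1] [_ pin1].
rewrite /eprob -(pair_bigA _ (fun S (f : {ffun 'I_m -> {set 'I_n}}) =>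
  po S * \prod_o pin (f o))) /=.
under eq_bigr do rewrite -mulr_sumr -(bigA_distr_bigA (fun _ S => pin S)) /= pin1.
by rewrite -big_distrl /= po1 big1 ?mulr1.
Qed.

Definition set_inner (e : Edraw n m) (o : 'I_m) (S : {set 'I_n}) : Edraw n m :=
  (e.1, [ffun o' => if o' == o then S else e.2 o']).

Lemma Eepoch_resample_inner (o : 'I_m) (F : Edraw n m -> R) :
  Eepoch F = Eepoch (fun e => \sum_S pin S * F (set_inner e o S)).
Proof.
case: pin_pmf => _ pin1; rewrite /Eepoch.
apply: (@sum_resample R _ _ (eprob po pin)
  (fun e => po e.1 * \prod_(o' | o' != o) pin (e.2 o')) _ (fun e => e.2 o) (set_inner^~ o) F)
  => //.
- by move=> e; rewrite /eprob (bigD1 o) //= mulrA mulrAC.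
- move=> e S /=; congr (_ * _); apply: eq_bigr => o' /negbTE o'_neq.
  by rewrite ffunE o'_neq.
- by move=> e S /=; rewrite ffunE eqxx.
- move=> [S0 St] S; congr pair; apply/ffunP => o'.
  by rewrite !ffunE; case: eqP => // ->.
Qed.

Lemma Eepoch_resample_outer (F : Edraw n m -> R) :
  Eepoch F = Eepoch (fun e => \sum_S po S * F (S, e.2)).
Proof.
case: po_pmf => _ po1; rewrite /Eepoch.
apply: (@sum_resample R _ _ (eprob po pin) (fun e => \prod_o pin (e.2 o)) _ fst
  (fun e S => (S, e.2)) F) => //.
- by move=> e; rewrite /eprob mulrC.
- by case.
Qed.

Lemma Eexp_succ k (F : seq (Edraw n m) -> Edraw n m -> R) :
  Eexp po pin k.+1 F =
  \sum_(h : k.-tuple (Edraw n m)) (\prod_(e <- h) eprob po pin e) * Eepoch (F h).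
Proof.
rewrite /Eexp sum_tuple_rcons; apply: eq_bigr => h _.
rewrite /Eepoch mulr_sumr; apply: eq_bigr => e _.
rewrite big_rcons /= -cats1 take_size_cat ?size_tuple //.
by rewrite nth_cat size_tuple ltnn subnn mulrA.
Qed.

(* Eexp averages over i.i.d. epochs, so an estimate for the last epoch that
   holds whatever the earlier epochs were passes to Eexp. *)
Lemma Eexp_le_epochwise j (F : seq (Edraw n m) -> Edraw n m -> R)
    (H : nat -> seq (Edraw n m) -> Edraw n m -> R) (a b : R) (lo hi : nat) :
  (0 < j)%N ->
  (forall hs, Eepoch (F hs) <= a * \sum_(lo <= k < hi) Eepoch (H k hs) + b) ->
  Eexp po pin j F <= a * \sum_(lo <= k < hi) Eexp po pin j (H k) + b.
Proof.
case: j => [//|j] _ F_le.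
under [X in _ <= _ * X + _]eq_bigr => k _ do rewrite Eexp_succ.
rewrite Eexp_succ exchange_big /= mulr_sumr.
have -> : b = \sum_(h : j.-tuple (Edraw n m)) (\prod_(e <- h) eprob po pin e) * b.
  by rewrite -mulr_suml sum_tuple_prod1 ?eprob_sum1 ?mul1r.
rewrite -big_split /=; apply: ler_sum => h _; rewrite -mulr_sumr mulrCA -mulrDr.
by apply: ler_wpM2l; [apply: prodr_ge0 => e _; exact: eprob_ge0 | exact: F_le].
Qed.

End EpochLaw.

Section EpochDynamics.
Variables (R : realType) (n d : nat) (gf : 'I_n -> 'rV[R]_d -> 'rV[R]_d).
Variables (po pin : {set 'I_n} -> R) (eta : R) (pr : 'rV[R]_d -> 'rV[R]_d).

Lemma epoch_state_succ x0 S0 St t :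
  epoch_state gf po pin eta pr x0 S0 St t.+1 =
  let s := epoch_state gf po pin eta pr x0 S0 St t in
  let V := est pin (St t.+1) (fun i => gf i s.1.2 - gf i s.1.1) + s.2 in
  (s.1.2, pr (s.1.2 - eta *: V), V).
Proof. by rewrite /=; case: (epoch_state _ _ _ _ _ _ _ _ t) => [[]]. Qed.

Lemma eq_epoch_state x0 S0 St St' t :
  (forall k, (0 < k <= t)%N -> St k = St' k) ->
  epoch_state gf po pin eta pr x0 S0 St t = epoch_state gf po pin eta pr x0 S0 St' t.
Proof.
elim: t => [//|t IHt] eqSt.
rewrite !epoch_state_succ IHt => [|k /andP[k_gt0 k_le]]; last first.
  by rewrite eqSt // k_gt0 ltnW.
by rewrite eqSt ?leqnn.
Qed.

Variable m : nat.

Lemma inner_draw_set_inner_le (e : Edraw n m) (o : 'I_m) S k :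
  (0 < k <= o)%N -> inner_draw (set_inner e o S) k = inner_draw e k.
Proof.
move=> k_bounds; rewrite /inner_draw; case: insubP => [u _ u_val|] //=.
rewrite ffunE; case: eqP => // u_o.
by move: k_bounds; rewrite -u_o -[nat_of_ord u]/(val u) u_val; lia.
Qed.

Lemma inner_draw_set_inner_at (e : Edraw n m) (o : 'I_m) S :
  inner_draw (set_inner e o S) o.+1 = S.
Proof.
rewrite /inner_draw /=; case: insubP => [u _ /val_inj-> |]; last by rewrite ltn_ord.
by rewrite ffunE eqxx.
Qed.

Definition epoch_err x0 (e : Edraw n m) t :=
  let s := epoch_run gf po pin eta pr x0 e t in sqnorm (s.2 - gradf gf s.1.1).

Definition epoch_dist x0 (e : Edraw n m) k :=
  sqnorm ((epoch_run gf po pin eta pr x0 e k).1.1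
          - (epoch_run gf po pin eta pr x0 e k.-1).1.1).

Lemma epoch_dist_succ x0 e t :
  let s := epoch_run gf po pin eta pr x0 e t in
  epoch_dist x0 e t.+1 = sqnorm (s.1.2 - s.1.1).
Proof. by rewrite /epoch_dist /epoch_run epoch_state_succ. Qed.

Lemma epoch_err_set_inner x0 e (o : 'I_m) S :
  let s := epoch_run gf po pin eta pr x0 e o in
  let D i := gf i s.1.2 - gf i s.1.1 in
  epoch_err x0 (set_inner e o S) o.+1
  = sqnorm ((s.2 - gradf gf s.1.1) + est pin S D - (n%:R)^-1 *: \sum_i D i).
Proof.
rewrite /epoch_err /epoch_run epoch_state_succ /= inner_draw_set_inner_at.
rewrite (@eq_epoch_state _ _ _ (inner_draw e)) => [|k]; last first.
  exact: inner_draw_set_inner_le.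
set s := epoch_state _ _ _ _ _ _ _ _ _; set D := fun i => _.
have -> : gradf gf s.1.2 = gradf gf s.1.1 + (n%:R)^-1 *: \sum_i D i.
  by rewrite /gradf /D sumrB scalerBr addrC subrK.
by congr sqnorm; rewrite opprD !addrA [_ + s.2]addrC (addrAC s.2).
Qed.

Variables (G L : 'I_n -> R) (v' v : 'I_n -> R).
Hypothesis n_gt0 : (0 < n)%N.
Hypothesis gf_bounded : forall i x, enorm (gf i x) <= G i.
Hypothesis gf_lipschitz : forall i x y, enorm (gf i x - gf i y) <= L i * enorm (x - y).
Hypotheses (po_proper : proper_sampling po) (po_ESO : ESO po v').
Hypotheses (pin_proper : proper_sampling pin) (pin_ESO : ESO pin v).

Let po_pmf : is_pmf po. Proof. by case: po_proper. Qed.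
Let pin_pmf : is_pmf pin. Proof. by case: pin_proper. Qed.

Let Q := \sum_i v i * L i ^+ 2 / (marg pin i * n%:R ^+ 2).
Let Q' := \sum_i v' i * G i ^+ 2 / (marg po i * n%:R ^+ 2).

Lemma Eepoch_err0 x0 : Eepoch po pin (fun e => epoch_err x0 e 0) <= Q'.
Proof.
rewrite Eepoch_resample_outer //.
apply: le_trans (_ : Eepoch po pin (fun=> Q') <= Q'); last first.
  by rewrite /Eepoch -mulr_suml eprob_sum1 ?mul1r.
apply: ler_sum => e _; apply: ler_wpM2l; first exact: eprob_ge0.
case: po_proper => _ po_marg_gt0.
have := ESO_variance_rV po_pmf po_ESO n_gt0 po_marg_gt0 0 (fun i => gf i x0).
rewrite sqnorm0 add0r; under eq_bigr do rewrite add0r.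
move=> /le_trans; apply; rewrite -[Q']mulr1.
rewrite /Q'; apply: (ESO_weighted_sum_le po_pmf po_ESO po_marg_gt0) => i.
by rewrite mulr1 sqnorm_le_sqr.
Qed.

Lemma Eepoch_err_succ x0 t : (t < m)%N ->
  Eepoch po pin (fun e => epoch_err x0 e t.+1)
  <= Eepoch po pin (fun e => epoch_err x0 e t)
     + Q * Eepoch po pin (fun e => epoch_dist x0 e t.+1).
Proof.
move=> t_lt; pose o : 'I_m := Ordinal t_lt.
rewrite (Eepoch_resample_inner po pin_pmf o) /Eepoch mulr_sumr -big_split /=.
apply: ler_sum => e _; rewrite mulrCA -mulrDr.
apply: ler_wpM2l; first exact: eprob_ge0.
under eq_bigr do rewrite epoch_err_set_inner.
case: pin_proper => _ pin_marg_gt0.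
apply: le_trans (ESO_variance_rV pin_pmf pin_ESO n_gt0 pin_marg_gt0 _ _) _.
apply: lerD => //; rewrite epoch_dist_succ.
apply: (ESO_weighted_sum_le pin_pmf pin_ESO pin_marg_gt0) => i.
exact: sqnorm_le_lipschitz.
Qed.

Lemma Eepoch_err_le x0 t : (t <= m)%N ->
  Eepoch po pin (fun e => epoch_err x0 e t)
  <= Q * \sum_(1 <= k < t.+1) Eepoch po pin (fun e => epoch_dist x0 e k) + Q'.
Proof.
elim: t => [_|t IHt t_lt]; first by rewrite big_geq // mulr0 add0r Eepoch_err0.
apply: le_trans (Eepoch_err_succ x0 t_lt) _.
rewrite big_nat_recr //= mulrDr addrAC lerD2r.
exact: IHt (ltnW t_lt).
Qed.

End EpochDynamics.

Theorem lemma6p1 (R : realType) (n d m : nat)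
  (f : 'I_n -> 'rV[R]_d -> R) (gf : 'I_n -> 'rV[R]_d -> 'rV[R]_d)
  (G L : 'I_n -> R) (po pin : {set 'I_n} -> R) (v' v : 'I_n -> R)
  (r : 'rV[R]_d -> R) (eta : R) (pr : 'rV[R]_d -> 'rV[R]_d)
  (x1 : 'rV[R]_d) :
  (0 < n)%N ->
  (forall i x, differentiable (f i) x) ->
  (forall i x u, 'D_u (f i) x = dotv (gf i x) u) ->
  (forall i x, enorm (gf i x) <= G i) ->
  (forall i x y, enorm (gf i x - gf i y) <= L i * enorm (x - y)) ->
  proper_sampling po -> ESO po v' ->
  proper_sampling pin -> ESO pin v ->
  0 < eta -> is_prox_selection eta r pr ->
  forall j t : nat, (1 <= j)%N -> (1 <= t <= m)%N ->
  Eexp (m := m) po pin j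
    (fun hs e => sqnorm (Viter gf po pin eta pr x1 hs e t
                         - gradf gf (xiter gf po pin eta pr x1 hs e t)))
  <= (\sum_i v i * L i ^+ 2 / (marg pin i * n%:R ^+ 2))
       * \sum_(1 <= k < t.+1)
           Eexp (m := m) po pin j
             (fun hs e => sqnorm (xiter gf po pin eta pr x1 hs e k
                                  - xiter gf po pin eta pr x1 hs e k.-1))
     + \sum_i v' i * G i ^+ 2 / (marg po i * n%:R ^+ 2).
Proof.
move=> n_gt0 _ _ gf_bounded gf_lipschitz po_proper po_ESO pin_proper pin_ESO _ _
  j t j_gt0 /andP[_ t_le].
have [[po_pmf _] [pin_pmf _]] := (po_proper, pin_proper).
apply: (Eexp_le_epochwise po_pmf pin_pmf j_gt0) => hs.
exact: (Eepoch_err_le eta pr n_gt0 gf_bounded gf_lipschitz po_proper po_ESO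
  pin_proper pin_ESO (xtilde_from gf po pin eta pr x1 hs) t_le).
Qed.
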